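(* Let $G=(V,E)$ be a directed graph, $s\neq t$ vertices and $k\ge 2$ an integer. For any simple path $p^*(s,t)$ from $s$ to $t$ of length $l\le k$, its first two edges and its last two edges are definite edges.
   Context: A path from $x$ to $y$ in $G$ is a vertex sequence $x=v_0,\dots,v_m=y$ with $(v_{i-1},v_i)\in E$; its length is $m$ and $V(p)$ is its vertex set. A simple path has no repeated vertex. For a vertex $u$ and integer $l\ge 0$, $EV^*_l(s,u)$ exists iff there is at least one simple path from $s$ to $u$ of length at most $l$ not containing $t$, and then $EV^*_l(s,u)$ is the intersection of $V(p)$ over all such paths. Symmetrically, $EV^*_l(v,t)$ exists iff there is at least one simple path from $v$ to $t$ of length at most $l$ not containing $s$, and then it is the intersection of $V(p)$ over all such paths. An edge $e(u,v)\in E$ is a definite edge (for $s,t,k$) if at least one of the following holds: (a) $u=s$ and $EV^*_{k-1}(v,t)$ exists; (b) $v=t$ and $EV^*_{k-1}(s,u)$ exists; (c) $EV^*_1(s,u)$ and $EV^*_{k-2}(v,t)$ exist and $u\notin EV^*_{k-2}(v,t)$; (d) $EV^*_1(v,t)$ and $EV^*_{k-2}(s,u)$ exist and $v\notin EV^*_{k-2}(s,u)$. *)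

From mathcomp Require Import all_boot.
Set Implicit Arguments. Unset Strict Implicit. Unset Printing Implicit Defensive.

(* A path from x to y is the vertex sequence x :: p with consecutive pairs in E
   and last vertex y; its length is size p (number of edges); its vertex set is
   the elements of x :: p. *)

Section Graph.
Variables (V : eqType) (E : rel V).

Definition is_path (x y : V) (p : seq V) : Prop :=
  path E x p /\ last x p = y.

Definition simple_path (x y : V) (p : seq V) : Prop :=
  is_path x y p /\ uniq (x :: p).

(* Candidate paths for EV*_l(s,u): simple paths from s to u, length <= l,
   not containing t. *)
Definition EVs_cand (s t : V) (l : nat) (u : V) (p : seq V) : Prop :=
  simple_path s u p /\ size p <= l /\ t \notin (s :: p).

(* Candidate paths for EV*_l(v,t): simple paths from v to t, length <= l,
   not containing s. *)
Definition EVt_cand (s t : V) (l : nat) (v : V) (p : seq V) : Prop :=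
  simple_path v t p /\ size p <= l /\ s \notin (v :: p).

Definition EVs_exists s t l u : Prop := exists p, EVs_cand s t l u p.
Definition EVt_exists s t l v : Prop := exists p, EVt_cand s t l v p.

(* membership in the intersection of the vertex sets of all candidate paths
   (only meaningful together with the existence predicate) *)
Definition in_EVs s t l u (w : V) : Prop :=
  forall p, EVs_cand s t l u p -> w \in s :: p.
Definition in_EVt s t l v (w : V) : Prop :=
  forall p, EVt_cand s t l v p -> w \in v :: p.

Definition definite_edge (s t : V) (k : nat) (u v : V) : Prop :=
  E u v /\
  [\/ u = s /\ EVt_exists s t k.-1 v,
      v = t /\ EVs_exists s t k.-1 u,
      [/\ EVs_exists s t 1 u, EVt_exists s t (k - 2) v & ~ in_EVt s t (k - 2) v u]
    | [/\ EVt_exists s t 1 v, EVs_exists s t (k - 2) u & ~ in_EVs s t (k - 2) u v]].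

End Graph.

From mathcomp Require Import all_boot.
From mathcomp Require Import zify.

(* Every prefix s = v_0, ..., v_j (j < m) of a simple path p*(s,t) is itself a
   simple path of length j that avoids t, and every suffix v_j, ..., v_m = t
   (j > 0) is a simple path of length m - j that avoids s; since m <= k, these
   witness all the existence conditions needed for the first two and the last
   two edges.  The non-membership conditions (c) and (d) hold because the
   vertices of p*(s,t) are pairwise distinct: v_1 is not on the suffix starting
   at v_2, and v_{m-1} is not on the prefix ending at v_{m-2}. *)

Set Implicit Arguments.
Unset Strict Implicit.
Unset Printing Implicit Defensive.

Section SeqFacts.
Variable T : eqType.

Lemma last_take_nth (x : T) p j :
  j <= size p -> last x (take j p) = nth x (x :: p) j.
Proof.
elim: p x j => [|a p IHp] x [|j] //= lt_jp.
by rewrite IHp //; apply: set_nth_default => /=; lia.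
Qed.

Lemma mem_nth_take (x0 : T) q a j :
  uniq q -> a < size q -> (nth x0 q a \in take j q) = (a < j).
Proof. by move=> uq lt_aq; rewrite in_take ?mem_nth ?index_uniq. Qed.

Lemma mem_nth_drop (x0 : T) q a j :
  uniq q -> a < size q -> (nth x0 q a \in drop j q) = (j <= a).
Proof.
move=> uq lt_aq; have := mem_nth x0 lt_aq.
rewrite -[X in _ \in X](cat_take_drop j q) mem_cat mem_nth_take //.
have : uniq (take j q ++ drop j q) by rewrite cat_take_drop.
rewrite cat_uniq => /and3P[_ /hasPn disj _].
case: ltnP => [lt_aj _ | //]; apply/negP => in_drop.
by have := disj _ in_drop; rewrite /= mem_nth_take // lt_aj.
Qed.

End SeqFacts.

Section SimplePath.
Variables (V : eqType) (E : rel V) (s t : V) (p : seq V).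
Hypothesis sp : simple_path E s t p.

Local Notation v j := (nth s (s :: p) j).

Let path_p : path E s p. Proof. by case: sp => [[]]. Qed.
Let uniq_p : uniq (s :: p). Proof. by case: sp. Qed.

Lemma simple_path_last : t = v (size p).
Proof. by case: sp => [[_ <-] _]; rewrite -last_take_nth // take_size. Qed.

Lemma simple_path_edge j : 0 < j <= size p -> E (v j.-1) (v j).
Proof.
move=> /andP[j_gt0 le_jp].
have /(pathP s) edges := path_p.
by rewrite -{2}(prednK j_gt0); apply: edges; lia.
Qed.

Lemma mem_prefix a j : a <= size p -> (v a \in s :: take j p) = (a <= j).
Proof.
by move=> le_ap; rewrite -[s :: take j p]/(take j.+1 (s :: p)) mem_nth_take.
Qed.

Lemma suffix_nth j : j <= size p -> drop j (s :: p) = v j :: drop j p.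
Proof. by move=> le_jp; rewrite (drop_nth s). Qed.

Lemma mem_suffix a j :
  a <= size p -> j <= size p -> (v a \in v j :: drop j p) = (j <= a).
Proof. by move=> le_ap le_jp; rewrite -suffix_nth // mem_nth_drop. Qed.

Lemma simple_path_prefix j : j <= size p -> simple_path E s (v j) (take j p).
Proof.
move=> le_jp; split; last exact: (take_uniq j.+1 uniq_p).
by split; [exact: take_path | exact: last_take_nth].
Qed.

Lemma simple_path_suffix j : j <= size p -> simple_path E (v j) t (drop j p).
Proof.
move=> le_jp; split; last by rewrite -suffix_nth // drop_uniq.
have : path E s (take j p ++ drop j p) by rewrite cat_take_drop.
rewrite cat_path last_take_nth // => /andP[_ path_drop]; split=> //.
case: sp => [[_ <-] _].
by rewrite -[in RHS](cat_take_drop j p) last_cat last_take_nth.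
Qed.

Lemma prefix_EVs_cand l j :
  j < size p -> j <= l -> EVs_cand E s t l (v j) (take j p).
Proof.
move=> lt_jp le_jl; split; first exact/simple_path_prefix/ltnW.
by rewrite size_takel ?(ltnW lt_jp) // simple_path_last mem_prefix // -ltnNge.
Qed.

Lemma suffix_EVt_cand l j :
  0 < j <= size p -> size p - j <= l -> EVt_cand E s t l (v j) (drop j p).
Proof.
move=> /andP[j_gt0 le_jp] le_l; split; first exact: simple_path_suffix.
split; first by rewrite size_drop.
by rewrite (@mem_suffix 0 j) // -ltnNge.
Qed.

Variable k : nat.
Hypothesis le_pk : size p <= k.

Lemma definite_first_edge : 0 < size p -> definite_edge E s t k (v 0) (v 1).
Proof.
move=> p_gt0; split; first exact: (@simple_path_edge 1).
by apply: Or41; split=> //; exists (drop 1 p); apply: suffix_EVt_cand; lia.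
Qed.

Lemma definite_last_edge :
  0 < size p -> definite_edge E s t k (v (size p).-1) (v (size p)).
Proof.
move=> p_gt0; split; first by apply: simple_path_edge; rewrite p_gt0 /=.
apply: Or42; split; first by rewrite -simple_path_last.
by exists (take (size p).-1 p); apply: prefix_EVs_cand; lia.
Qed.

Lemma definite_second_edge : 1 < size p -> definite_edge E s t k (v 1) (v 2).
Proof.
move=> p_gt1; split; first exact: (@simple_path_edge 2).
apply: Or43; split.
- by exists (take 1 p); apply: prefix_EVs_cand.
- by exists (drop 2 p); apply: suffix_EVt_cand; lia.
- have cand : EVt_cand E s t (k - 2) (v 2) (drop 2 p).
    by apply: suffix_EVt_cand; lia.
  by move=> in_all; have := in_all _ cand; rewrite mem_suffix; lia.
Qed.

Lemma definite_penultimate_edge :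
  1 < size p -> definite_edge E s t k (v (size p).-2) (v (size p).-1).
Proof.
move=> p_gt1; split; first by apply: simple_path_edge; lia.
apply: Or44; split.
- by exists (drop (size p).-1 p); apply: suffix_EVt_cand; lia.
- by exists (take (size p).-2 p); apply: prefix_EVs_cand; lia.
- have cand : EVs_cand E s t (k - 2) (v (size p).-2) (take (size p).-2 p).
    by apply: prefix_EVs_cand; lia.
  by move=> in_all; have := in_all _ cand; rewrite mem_prefix; lia.
Qed.

End SimplePath.

Theorem theorem4p9 (V : eqType) (E : rel V) (s t : V) (k : nat) (p : seq V) :
  s != t -> 2 <= k ->
  simple_path E s t p -> size p <= k ->
  forall i : nat, 1 <= i <= size p -> (i <= 2) || (size p - 1 <= i) ->
    definite_edge E s t k (nth s (s :: p) i.-1) (nth s (s :: p) i).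
Proof.
(* s != t and 2 <= k are implied: a simple path from s to s is empty, and
   k < 2 leaves only the edge i = 1 = size p. *)
move=> _ _ sp le_pk i /andP[i_gt0 le_ip] i_end.
have [-> | i_ne1] := eqVneq i 1.
  by apply: (definite_first_edge sp le_pk); lia.
have [-> | i_ne2] := eqVneq i 2.
  by apply: (definite_second_edge sp le_pk); lia.
have [-> | i_ne_p] := eqVneq i (size p).
  by apply: (definite_last_edge sp le_pk); lia.
have -> : i = (size p).-1 by lia.
by apply: (definite_penultimate_edge sp le_pk); lia.
Qed.
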